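(* Let $s \geq 1$, $\Pi \subset [s]$, and $u \in \mathbb{Z}$ with $|\Pi| > u \geq 0$, let $v \in \mathbb{Z}$, and let $\Gamma, \alpha \in \mathbb{Z}^s$. Then \[ \sum_{\substack{\sigma \in \mathfrak{S}_s \\ M \subset \Pi}} (-1)^{|M|} \operatorname{sgn}(\sigma)\, \Delta_s(\sigma \cdot^\alpha \Gamma - 1_M) \binom{v - |M| + u}{u} = 0, \] where $\binom{v - |M| + u}{u}$ denotes the polynomial $\frac{1}{u!}\prod_{i=1}^u (v - |M| + i)$.
   Context: For $\sigma \in \mathfrak{S}_s$ and $\Gamma = (\gamma_1,\ldots,\gamma_s), \alpha = (\alpha_1, \ldots, \alpha_s) \in \mathbb{Z}^s$, $\sigma \cdot^\alpha \Gamma \in \mathbb{Z}^s$ has $\ell$-th entry $\gamma_{\sigma^{-1}(\ell)} + \alpha_{\sigma^{-1}(\ell)} - \alpha_\ell$. $\Delta_s(y_1, \ldots, y_s) = \prod_{1 \leq v < w \leq s}(y_w - y_v)$. $1_M \in \{0,1\}^s$ is the indicator vector of $M \subset [s]$. *)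

From HB Require Import structures.
From mathcomp Require Import all_boot all_order all_algebra all_fingroup.
Set Implicit Arguments. Unset Strict Implicit. Unset Printing Implicit Defensive.
Import Order.TTheory GRing.Theory Num.Theory.
Local Open Scope ring_scope.

Definition Delta (s : nat) (y : 'I_s -> int) : int :=
  \prod_(v < s) \prod_(w < s | (v < w)%N) (y w - y v).

Definition twact (s : nat) (sigma : 'S_s) (alpha Gamma : 'I_s -> int) : 'I_s -> int :=
  fun l => Gamma ((sigma^-1)%g l) + alpha ((sigma^-1)%g l) - alpha l.

Definition ind (s : nat) (M : {set 'I_s}) : 'I_s -> int :=
  fun l => (l \in M)%:R.

Definition polybinom (x : int) (u : nat) : rat :=
  (\prod_(1 <= i < u.+1) (x%:~R + i%:R)) / (u`!)%:R.

From HB Require Import structures.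
From mathcomp Require Import all_boot all_order all_algebra all_fingroup.
From mathcomp Require Import ring.
Import Order.TTheory GRing.Theory Num.Theory.
Local Open Scope ring_scope.

(* As a Vandermonde determinant, Delta(sigma .^alpha Gamma - 1_M) is
   det(((Gamma + alpha)_(sigma^-1 k) - (alpha + 1_M)_k)^i); after expanding the
   determinant and reindexing, its alternating sum over sigma is a sum over
   tau of determinants whose i-th row is shifted by (alpha + 1_M)_(tau i).
   Such shifts do not change a Vandermonde determinant, so the sum over sigma
   is s! Delta(Gamma + alpha), independent of M.  What is left,
   sum_(M <= Pi) (-1)^|M| binom(v - |M| + u, u), is a finite difference of
   order |Pi| > u of a polynomial of degree u in v, hence 0. *)

Lemma eq_Delta n (y z : 'I_n -> int) : y =1 z -> Delta y = Delta z.
Proof. by move=> yz; apply: eq_bigr => i _; apply: eq_bigr => j _; rewrite !yz. Qed.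

Lemma Delta_det n (y : 'I_n -> int) :
  Delta y = \det (\matrix_(i < n, k < n) y k ^+ i).
Proof.
have -> : \matrix_(i < n, k < n) y k ^+ i = Vandermonde n (\row_k y k).
  by apply/matrixP => i k; rewrite !mxE.
rewrite det_Vandermonde; apply: eq_bigr => i _.
by apply: eq_bigr => j _; rewrite !mxE.
Qed.

Lemma det_powers_shift {R : comPzRingType} {n : nat} (b d : 'I_n -> R) :
  \det (\matrix_(i < n, k < n) (b k - d i) ^+ i)
  = \det (\matrix_(i < n, k < n) b k ^+ i).
Proof.
(* By the binomial theorem the shifted matrix is a unitriangular matrix times
   the unshifted one. *)
set L := \matrix_(i < n, j < n) ((- d i) ^+ (i - j) *+ 'C(i, j)).
have -> : \matrix_(i < n, k < n) (b k - d i) ^+ i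
          = L *m \matrix_(i < n, k < n) b k ^+ i.
  apply/matrixP => i k; rewrite !mxE addrC exprDn.
  under [RHS]eq_bigr do rewrite !mxE mulrnAl.
  rewrite -[RHS](big_mkord xpredT (fun j => ((- d i) ^+ (i - j) * b k ^+ j) *+ 'C(i, j))).
  rewrite (big_cat_nat (n := i.+1)) //= big_mkord [X in _ = _ + X]big_nat_cond.
  by rewrite [X in _ = _ + X]big1 ?addr0 // => j /andP[/andP[/bin_small-> _] _].
rewrite det_mulmx det_trig ?big1 ?mul1r // => [i _|].
  by rewrite mxE subnn binn.
by apply/is_trig_mxP => i j lt_ij; rewrite mxE bin_small.
Qed.

Lemma sum_sign_Delta_shift n (b c : 'I_n -> int) :
  \sum_(sigma : 'S_n)
     (-1) ^+ odd_perm sigma * Delta (fun l => b ((sigma^-1)%g l) - c l)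
  = Delta b *+ n`!.
Proof.
under eq_bigr do rewrite Delta_det /(\det _) mulr_sumr.
rewrite exchange_big /= -card_Sn -sumr_const; apply: eq_bigr => tau _.
rewrite Delta_det -(det_powers_shift b (c \o tau)) /(\det _).
rewrite [RHS](reindex_inj (h := fun sigma : 'S_n => (tau * sigma^-1)%g)) /=; last first.
  by move=> sigma1 sigma2 /mulgI /invg_inj.
apply: eq_bigr => sigma _; rewrite odd_permM odd_permV signr_addb mulrCA mulrA.
by congr (_ * _); apply: eq_bigr => i _; rewrite !mxE permM.
Qed.

Lemma polybinom0 (x : int) : polybinom x 0 = 1.
Proof. by rewrite /polybinom big_geq // divr1. Qed.

Lemma polybinom_pascal (x : int) (u : nat) :
  polybinom x u.+1 - polybinom (x - 1) u.+1 = polybinom x u.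
Proof.
set P := \prod_(1 <= i < u.+1) (x%:~R + i%:R : rat).
have prodS : \prod_(1 <= i < u.+2) (x%:~R + i%:R : rat) = P * (x%:~R + u.+1%:R).
  by rewrite big_nat_recr.
have prodS_pred : \prod_(1 <= i < u.+2) ((x - 1)%:~R + i%:R : rat) = x%:~R * P.
  rewrite big_nat_recl // rmorphB /=; congr (_ * _); first ring.
  by apply: eq_bigr => i _; rewrite -addn1 natrD; ring.
have fact_neq0 : (u`!%:R : rat) != 0 by rewrite pnatr_eq0 -lt0n fact_gt0.
have uS_neq0 : (u%:R + 1 : rat) != 0 by rewrite natr1 pnatr_eq0.
rewrite /polybinom prodS prodS_pred factS natrM -natr1 -/P.
by field; rewrite fact_neq0 uS_neq0.
Qed.

Lemma sum_subsets_D1 {T : finType} {V : nmodType} {P : {set T}} {x : T}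
    (F : {set T} -> V) :
  x \in P ->
  \sum_(M : {set T} | M \subset P) F M
  = \sum_(M : {set T} | M \subset P :\ x) (F M + F (x |: M)).
Proof.
move=> xP; rewrite big_split /= (bigID (fun M : {set T} => x \in M)) /= addrC.
congr (_ + _); first by apply: eq_bigl => M; rewrite subsetD1.
rewrite (reindex_onto (fun M => x |: M) (fun M => M :\ x)) /=; last first.
  by move=> M /andP[_ xM]; rewrite setD1K.
apply: eq_bigl => M; rewrite subsetD1 setU11 andbT subUset sub1set xP /=.
case xM: (x \in M); last by rewrite setU1K ?xM // eqxx.
rewrite andbF; case: eqP => [xMx|_]; last by rewrite andbF.
by have := setD11 x (x |: M); rewrite xMx xM.
Qed.

Lemma sum_subsets_sign_polybinom (T : finType) (u : nat) (P : {set T}) (v : int) :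
  (u < #|P|)%N ->
  \sum_(M : {set T} | M \subset P) ((-1) ^+ #|M| * polybinom (v - #|M|%:Z) u) = 0.
Proof.
elim: u P v => [|u IH] P v ltuP;
  have /set0Pn [x xP] : P != set0 by [rewrite -card_gt0 (leq_ltn_trans _ ltuP)];
  rewrite (sum_subsets_D1 _ xP).
  rewrite big1 // => M; rewrite subsetD1 => /andP[_ xM].
  by rewrite cardsU1 xM exprS !polybinom0; ring.
have ltuPx : (u < #|P :\ x|)%N by move: ltuP; rewrite (cardsD1 x P) xP.
apply: etrans (IH (P :\ x) v ltuPx).
apply: eq_bigr => M; rewrite subsetD1 => /andP[_ xM].
rewrite cardsU1 xM add1n exprS intS opprD addrA addrAC.
by rewrite -[polybinom _ u]polybinom_pascal; ring.
Qed.

Theorem corollary6p4 (s : nat) (Pi : {set 'I_s}) (u : nat) (v : int)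
    (Gamma alpha : 'I_s -> int) :
  (1 <= s)%N -> (u < #|Pi|)%N ->
  \sum_(sigma : 'S_s) \sum_(M : {set 'I_s} | M \subset Pi)
     ((-1) ^+ #|M| * (-1) ^+ odd_perm sigma
      * (Delta (fun l => twact sigma alpha Gamma l - ind M l))%:~R
      * polybinom (v - (#|M|)%:Z) u : rat) = 0.
Proof.
move=> _ ltuPi.
set K : int := Delta (fun k => Gamma k + alpha k) *+ s`!.
have sum_sigma M : \sum_(sigma : 'S_s) ((-1) ^+ odd_perm sigma
    * (Delta (fun l => twact sigma alpha Gamma l - ind M l))%:~R : rat) = K%:~R.
  rewrite /K -(sum_sign_Delta_shift _ _ (fun l => alpha l + ind M l)) rmorph_sum.
  apply: eq_bigr => sigma _; rewrite rmorphM /= rmorph_sign.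
  by congr (_ * _%:~R); apply: eq_Delta => l; rewrite /twact; ring.
rewrite exchange_big /= (eq_bigr (fun M : {set 'I_s} =>
  (-1) ^+ #|M| * polybinom (v - #|M|%:Z) u * K%:~R)).
  by rewrite -mulr_suml sum_subsets_sign_polybinom ?mul0r.
move=> M _; rewrite -(sum_sigma M) mulr_sumr; apply: eq_bigr => sigma _.
by rewrite [RHS]mulrACA [in RHS](mulrC (polybinom _ _)) [RHS]mulrA.
Qed.
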